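(* Let $P$ and $Q$ be stochastic matrices over a countable set $\Omega$. Say that $P$ and $Q$ satisfy condition $(\star)$ via a permutation $\sigma$ of $\Omega$ if (a) for all $i,j$, $P_{ij}>0\iff Q_{\sigma(i)\sigma(j)}>0$, and (b) for all $n,m\in\mathbb{N}$ and all $i,j,k\in\Omega$ with $P^{(n)}_{ij}P^{(m)}_{jk}>0$, $$\frac{P^{(n)}_{ij}P^{(m)}_{jk}}{P^{(n+m)}_{ik}}=\frac{Q^{(n)}_{\sigma(i)\sigma(j)}Q^{(m)}_{\sigma(j)\sigma(k)}}{Q^{(n+m)}_{\sigma(i)\sigma(k)}}.$$ Then: (1) if there is a $\rho$-unitary isomorphism $Arv(P)\to Arv(Q)$ for a *-automorphism $\rho$ of $\ell^\infty(\Omega)$, then $P$ and $Q$ satisfy $(\star)$ via $\sigma_\rho$; (2) if $P$ and $Q$ satisfy $(\star)$ via $\sigma$, then there is a $\rho_\sigma$-unitary isomorphism $Arv(P)\to Arv(Q)$.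
   Context: A stochastic matrix over $\Omega$ has nonnegative entries and row sums $1$; $P^{(n)}_{ij}$ is the $(i,j)$ entry of $P^n$ ($P^0=I$). Every *-automorphism $\rho$ of $\ell^\infty(\Omega)$ is of the form $\rho_\sigma(f)=f\circ\sigma^{-1}$ for a unique permutation $\sigma$; $\sigma_\rho$ denotes the permutation with $\rho(p_j)=p_{\sigma_\rho(j)}$, $p_j$ the indicator of $\{j\}$. $Arv(P)$: $Arv(P)_0=\ell^\infty(\Omega)$; $Arv(P)_n$ ($n\ge1$) is the set of complex $\Omega\times\Omega$ matrices $A=[a_{ij}]$ with $a_{ij}=0$ whenever $P^{(n)}_{ij}=0$ and $\sup_j\sum_i|a_{ij}|^2<\infty$, a W*-correspondence over $\ell^\infty(\Omega)$ with actions by multiplication by diagonal matrices and inner product $\mathrm{Diag}(A^*B)$; $U^P_{n,m}(A\otimes B)=(\sqrt{P^{n+m}})^{\flat}*[(\sqrt{P^n}*A)(\sqrt{P^m}*B)]$ for $n,m\ge1$ ($*$ entrywise product, $\sqrt\cdot$ entrywise, $M^\flat_{ik}=M_{ik}^{-1}$ if $M_{ik}>0$, else $0$), $U_{0,n},U_{n,0}$ module actions. A $\rho$-unitary isomorphism $V:Arv(P)\to Arv(Q)$ is a family $(V_n)_{n\ge0}$ with $V_0=\rho$ and, for $n\ge1$, $V_n:Arv(P)_n\to Arv(Q)_n$ surjective linear with $V_n(a\xi b)=\rho(a)V_n(\xi)\rho(b)$ and $\rho^{-1}(\langle V_n\xi,V_n\eta\rangle)=\langle\xi,\eta\rangle$,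 such that $V_{n+m}U^P_{n,m}=U^Q_{n,m}(V_n\otimes V_m)$ for all $n,m$. *)

From Stdlib Require Import Reals.
From Coquelicot Require Import Coquelicot.
From mathcomp Require Import ssreflect ssrfun ssrbool eqtype choice.

Set Implicit Arguments.
Unset Strict Implicit.

Section Defs.
Variable T : countType.

Definition enumR (f : T -> R) (n : nat) : R :=
  match @pickle_inv T n with Some x => f x | None => 0%R end.

(* sum over the countable set T (used only for absolutely summable families) *)
Definition has_rsum (f : T -> R) (s : R) : Prop :=
  @is_series R_AbsRing R_NormedModule (enumR f) s.
Definition ex_rsum (f : T -> R) : Prop := exists s, has_rsum f s.
Definition rsum (f : T -> R) : R := Series (enumR f).
Definition csum (f : T -> C) : C :=
  (rsum (fun x => Re (f x)), rsum (fun x => Im (f x))).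

Definition rmat := T -> T -> R.
Definition cmat := T -> T -> C.

Fixpoint mpow (P : rmat) (n : nat) : rmat :=
  match n with
  | O => fun i k => if i == k then 1%R else 0%R
  | S n' => fun i k => rsum (fun j => (mpow P n' i j * P j k)%R)
  end.

Definition stochastic (P : rmat) : Prop :=
  (forall i j, (0 <= P i j)%R) /\ (forall i, has_rsum (P i) 1%R).

Definition linf (f : T -> C) : Prop := exists M, forall i, (Cmod (f i) <= M)%R.

Definition pind (j : T) : T -> C := fun i => if i == j then RtoC 1 else RtoC 0.

Definition star_aut (rho : (T -> C) -> (T -> C)) : Prop :=
  (forall f, linf f -> linf (rho f)) /\
  (forall f g, linf f -> linf g -> rho f = rho g -> f = g) /\
  (forall g, linf g -> exists f, linf f /\ rho f = g) /\
  (forall f g, linf f -> linf g -> rho (fun i => f i + g i)%C = (fun i => rho f i + rho g i)%C) /\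
  (forall c f, linf f -> rho (fun i => c * f i)%C = (fun i => c * rho f i)%C) /\
  (forall f g, linf f -> linf g -> rho (fun i => f i * g i)%C = (fun i => rho f i * rho g i)%C) /\
  (forall f, linf f -> rho (fun i => Cconj (f i)) = (fun i => Cconj (rho f i))).

(* Arv(P)_n for n >= 1 *)
Definition Arv (P : rmat) (n : nat) (A : cmat) : Prop :=
  (forall i j, mpow P n i j = 0%R -> A i j = RtoC 0) /\
  exists M, forall j, ex_rsum (fun i => (Cmod (A i j) ^ 2)%R) /\
                      (rsum (fun i => (Cmod (A i j) ^ 2)%R) <= M)%R.

(* bimodule actions: multiplication by diagonal matrices *)
Definition lact (a : T -> C) (A : cmat) : cmat := fun i j => (a i * A i j)%C.
Definition ract (A : cmat) (b : T -> C) : cmat := fun i j => (A i j * b j)%C.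
Definition cadd (A B : cmat) : cmat := fun i j => (A i j + B i j)%C.
Definition cscal (c : C) (A : cmat) : cmat := fun i j => (c * A i j)%C.

(* inner product Diag(A^* B) *)
Definition ip (A B : cmat) : T -> C := fun j => csum (fun i => (Cconj (A i j) * B i j)%C).

(* U^P_{n,m}(A (x) B) for n, m >= 1 *)
Definition flatinv (x : R) : R := if Rlt_dec 0 x then (/ x)%R else 0%R.
Definition Umul (P : rmat) (n m : nat) (A B : cmat) : cmat :=
  fun i k =>
    (RtoC (flatinv (sqrt (mpow P (n + m) i k))) *
     csum (fun j => (RtoC (sqrt (mpow P n i j)) * A i j) *
                    (RtoC (sqrt (mpow P m j k)) * B j k)))%C.

(* V = (V_n)_n is a rho-unitary isomorphism Arv(P) -> Arv(Q); V_0 = rho,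
   V n for n >= 1 acts on matrices (V 0 is unused) *)
Definition rho_unitary_iso (P Q : rmat) (rho : (T -> C) -> (T -> C))
    (V : nat -> cmat -> cmat) : Prop :=
  (forall n, (1 <= n)%nat ->
     (forall A, Arv P n A -> Arv Q n (V n A)) /\
     (forall B, Arv Q n B -> exists A, Arv P n A /\ V n A = B) /\
     (forall A B, Arv P n A -> Arv P n B -> V n (cadd A B) = cadd (V n A) (V n B)) /\
     (forall c A, Arv P n A -> V n (cscal c A) = cscal c (V n A)) /\
     (forall a b A, linf a -> linf b -> Arv P n A ->
        V n (ract (lact a A) b) = ract (lact (rho a) (V n A)) (rho b)) /\
     (forall A B, Arv P n A -> Arv P n B -> ip (V n A) (V n B) = rho (ip A B))) /\
  (forall n m A B, (1 <= n)%nat -> (1 <= m)%nat -> Arv P n A -> Arv P m B ->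
     V (n + m)%nat (Umul P n m A B) = Umul Q n m (V n A) (V m B)).

Definition star_cond (P Q : rmat) (sigma : T -> T) : Prop :=
  (forall i j, (0 < P i j)%R <-> (0 < Q (sigma i) (sigma j))%R) /\
  (forall (n m : nat) (i j k : T),
     (0 < mpow P n i j * mpow P m j k)%R ->
     (mpow P n i j * mpow P m j k / mpow P (n + m) i k)%R =
     (mpow Q n (sigma i) (sigma j) * mpow Q m (sigma j) (sigma k)
        / mpow Q (n + m) (sigma i) (sigma k))%R).

End Defs.

(* Everything is read off the matrix units [E_ij].  If [V] is a [rho]-unitary
   isomorphism, [E_ij] lies in [Arv(P)_n] iff [P^(n)_ij > 0]; as [V_n] is a bimodule map
   over [rho] with [rho(p_j) = p_sigma(j)], it sends [E_ij] to [l E_sigma(i)sigma(j)],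
   and preservation of inner products gives [|l| = 1].  So [P^(n)_ij > 0] iff
   [Q^(n)_sigma(i)sigma(j) > 0], and applying [V_(n+m)] to
   [U(E_ij, E_jk) = sqrt (P^(n)_ij P^(m)_jk / P^(n+m)_ik) E_ik] yields (b).
   Conversely, under (star) relabelling the entries by [sigma^-1] is such an
   isomorphism: (a) makes it respect the supports, sums over [Omega] are invariant
   under bijections, and (b) says that the scalar factors in [U^P] and [U^Q] agree. *)

From HB Require Import structures.
From Stdlib Require Import Reals Lra Lia Classical FunctionalExtensionality.
From Coquelicot Require Import Coquelicot.
From mathcomp Require Import ssreflect ssrfun ssrbool eqtype choice ssrnat seq bigop.

Set Implicit Arguments.
Unset Strict Implicit.

HB.instance Definition _ := Monoid.isComLaw.Build R 0%R Rplus
  (fun a b c => esym (Rplus_assoc a b c)) Rplus_comm Rplus_0_l.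

Open Scope R_scope.

Lemma sum_n_iota (a : nat -> R) N :
  sum_n a N = \big[Rplus/0]_(n <- iota 0 N.+1) a n.
Proof.
elim: N => [|N IH]; first by rewrite sum_O big_cons big_nil Rplus_0_r.
have -> : iota 0 N.+2 = iota 0 N.+1 ++ [:: N.+1] by rewrite -addn1 iotaD.
by rewrite sum_Sn IH big_cat big_seq1.
Qed.

Lemma big_Rplus_ge0 (I : Type) (s : seq I) (f : I -> R) :
  (forall x, 0 <= f x) -> 0 <= \big[Rplus/0]_(x <- s) f x.
Proof.
move=> f_ge0; elim: s => [|x s IH]; first by rewrite big_nil; lra.
rewrite big_cons; have := f_ge0 x; lra.
Qed.

Lemma big_Rmult_distrl (I : Type) (s : seq I) (c : R) (f : I -> R) :
  \big[Rplus/0]_(x <- s) (c * f x) = c * \big[Rplus/0]_(x <- s) f x.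
Proof.
elim: s => [|x s IH]; first by rewrite !big_nil; ring.
by rewrite !big_cons IH; ring.
Qed.

Lemma big_Rplus_subset (I : eqType) (s t : seq I) (f : I -> R) :
  (forall x, 0 <= f x) -> uniq s -> uniq t -> {subset s <= t} ->
  \big[Rplus/0]_(x <- s) f x <= \big[Rplus/0]_(x <- t) f x.
Proof.
move=> f_ge0 s_uniq t_uniq sub_st.
rewrite -(perm_big _ (permEl (perm_filterC (mem s) t))) big_cat /=.
have perm_s : perm_eq [seq x <- t | mem s x] s.
  apply: uniq_perm => //; first exact: filter_uniq.
  move=> x; rewrite mem_filter; apply/andP/idP => [[]//|sx].
  by split => //; exact: sub_st.
rewrite (perm_big _ perm_s).
rewrite -[X in X <= _]Rplus_0_r; apply: Rplus_le_compat_l; exact: big_Rplus_ge0.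
Qed.

Lemma sum_n_ge0 (a : nat -> R) N : (forall n, 0 <= a n) -> 0 <= sum_n a N.
Proof. by move=> a_ge0; rewrite sum_n_iota; exact: big_Rplus_ge0. Qed.

Lemma sum_n_le_Series (a : nat -> R) N :
  (forall n, 0 <= a n) -> ex_series a -> sum_n a N <= Series a.
Proof.
move=> a_ge0 a_sum; apply: (is_lim_seq_incr_compare (sum_n a)).
  exact: Series_correct a_sum.
by move=> n; rewrite sum_Sn /plus /=; have := a_ge0 n.+1; lra.
Qed.

Lemma term_le_Series (a : nat -> R) N :
  (forall n, 0 <= a n) -> ex_series a -> a N <= Series a.
Proof.
move=> a_ge0 a_sum; apply: Rle_trans (sum_n_le_Series N a_ge0 a_sum).
case: N => [|N]; first by rewrite sum_O; lra.
by rewrite sum_Sn /plus /=; have := sum_n_ge0 N a_ge0; lra.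
Qed.

Lemma ex_series_bounded (a : nat -> R) M :
  (forall n, 0 <= a n) -> (forall N, sum_n a N <= M) ->
  ex_series a /\ Series a <= M.
Proof.
move=> a_ge0 le_M.
have [l sum_l] : ex_finite_lim_seq (sum_n a).
  apply: (ex_finite_lim_seq_incr _ M) => // n.
  by rewrite sum_Sn /plus /=; have := a_ge0 n.+1; lra.
have a_l : is_series a l := sum_l.
split; first by exists l.
rewrite (is_series_unique _ _ a_l).
exact: is_lim_seq_le _ _ _ _ le_M sum_l (is_lim_seq_const M).
Qed.

(* No summability hypothesis: a divergent nonnegative series has [Series] equal to the
   real part of [p_infty], i.e. [0]. *)
Lemma Series_ge0 (a : nat -> R) : (forall n, 0 <= a n) -> 0 <= Series a.
Proof.
move=> a_ge0; rewrite /Series.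
have : Rbar_le (Lim_seq (fun _ => 0)) (Lim_seq (sum_n a)).
  by apply: Lim_seq_le_loc; exists 0%N => n _; exact: sum_n_ge0.
rewrite Lim_seq_const; case: (Lim_seq (sum_n a)) => [x //||[]] _; exact: Rle_refl.
Qed.

Section CountableSums.
Variable T : countType.
Implicit Types (f g : T -> R) (s : seq T).

Definition pickle_prefix N : seq T := pmap (@pickle_inv T) (iota 0 N.+1).

Lemma sum_n_enumR f N :
  sum_n (enumR f) N = \big[Rplus/0]_(x <- pickle_prefix N) f x.
Proof.
rewrite sum_n_iota /pickle_prefix.
elim: (iota 0 N.+1) => [|n l IH]; first by rewrite !big_nil.
rewrite big_cons IH /enumR /=; case: (pickle_inv n) => [x|] /=.
  by rewrite big_cons.
by rewrite Rplus_0_l.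
Qed.

Lemma pickle_prefix_uniq N : uniq (pickle_prefix N).
Proof. exact: (pmap_uniq (@pickle_invK T) (iota_uniq 0 N.+1)). Qed.

Lemma mem_pickle_prefix x N : (x \in pickle_prefix N) = (pickle x <= N)%N.
Proof.
rewrite mem_pmap; apply/mapP/idP => [[n n_in x_n]|le_xN].
  by move: n_in; rewrite mem_iota -(@pickle_invK T n) -x_n.
by exists (pickle x); rewrite ?mem_iota ?pickleK_inv.
Qed.

Lemma pickle_prefix_cover s : exists N, {subset s <= pickle_prefix N}.
Proof.
elim: s => [|y s [N sub_N]]; first by exists 0%N.
exists (maxn (pickle y) N) => z; rewrite inE mem_pickle_prefix.
case/orP => [/eqP ->|/sub_N]; first exact: leq_maxl.
by rewrite mem_pickle_prefix => le_zN; exact: leq_trans le_zN (leq_maxr _ _).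
Qed.

Lemma enumR_ge0 f n : (forall x, 0 <= f x) -> 0 <= enumR f n.
Proof. by move=> f_ge0; rewrite /enumR; case: (pickle_inv n) => [x|] //; lra. Qed.

Lemma enumR_pickle f x : enumR f (pickle x) = f x.
Proof. by rewrite /enumR pickleK_inv. Qed.

Lemma enumR_ext f g : (forall x, f x = g x) -> forall n, enumR f n = enumR g n.
Proof. by move=> fg n; rewrite /enumR; case: (pickle_inv n). Qed.

Lemma has_rsumE f l : has_rsum f l -> rsum f = l.
Proof. exact: is_series_unique. Qed.

Lemma rsum_ext f g : (forall x, f x = g x) -> rsum f = rsum g.
Proof. by move=> fg; apply: Series_ext; exact: enumR_ext. Qed.

Lemma ex_rsum_ext f g : (forall x, f x = g x) -> ex_rsum f -> ex_rsum g.
Proof. by move=> fg; apply: ex_series_ext; exact: enumR_ext. Qed.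

Lemma rsum_ge0 f : (forall x, 0 <= f x) -> 0 <= rsum f.
Proof. by move=> f_ge0; apply: Series_ge0 => n; exact: enumR_ge0. Qed.

Lemma prefix_le_rsum f N : (forall x, 0 <= f x) -> ex_rsum f ->
  \big[Rplus/0]_(x <- pickle_prefix N) f x <= rsum f.
Proof.
move=> f_ge0 f_sum; rewrite -sum_n_enumR.
by apply: sum_n_le_Series => // n; exact: enumR_ge0.
Qed.

Lemma term_le_rsum f x : (forall x, 0 <= f x) -> ex_rsum f -> f x <= rsum f.
Proof.
move=> f_ge0 f_sum; rewrite -(enumR_pickle f x).
by apply: term_le_Series => // n; exact: enumR_ge0.
Qed.

Lemma rsum_bounded f M : (forall x, 0 <= f x) ->
  (forall N, \big[Rplus/0]_(x <- pickle_prefix N) f x <= M) ->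
  ex_rsum f /\ rsum f <= M.
Proof.
move=> f_ge0 le_M; apply: ex_series_bounded => [n|N]; first exact: enumR_ge0.
by rewrite sum_n_enumR.
Qed.

Lemma rsum_single f x0 : (forall x, x <> x0 -> f x = 0) ->
  ex_rsum f /\ rsum f = f x0.
Proof.
move=> f0; suff f_x0 : has_rsum f (f x0) by split; [exists (f x0)|exact: has_rsumE].
change (is_lim_seq (sum_n (enumR f)) (f x0)).
apply: (is_lim_seq_ext_loc (fun _ => f x0)); last exact: is_lim_seq_const.
exists (pickle x0) => N /leP le_x0N.
rewrite sum_n_enumR (bigD1_seq x0) ?pickle_prefix_uniq ?mem_pickle_prefix //=.
by rewrite big1 => [|x /eqP x_x0]; [rewrite Rplus_0_r|exact: f0].
Qed.

Lemma ex_rsum_le f g : (forall x, Rabs (f x) <= g x) -> ex_rsum g -> ex_rsum f.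
Proof.
move=> le_fg; apply: ex_series_le => n; rewrite /enumR.
case: (pickle_inv n) => [x|]; [exact: le_fg|rewrite norm_zero; exact: Rle_refl].
Qed.

Lemma ex_rsum_mul_le1 f g : (forall x, 0 <= f x) -> (forall x, 0 <= g x <= 1) ->
  ex_rsum f -> ex_rsum (fun x => f x * g x).
Proof.
move=> f_ge0 g01; apply: ex_rsum_le => x.
move: (f_ge0 x) (g01 x) => fx gx; rewrite Rabs_pos_eq; nra.
Qed.

Lemma ex_rsum_scal f c : ex_rsum f -> ex_rsum (fun x => f x * c).
Proof.
move=> f_sum; apply: (ex_series_ext (fun n => enumR f n * c)); last exact: ex_series_scal_r.
by move=> n; rewrite /enumR; case: (pickle_inv n) => //; rewrite Rmult_0_l.
Qed.

Lemma ex_rsum_plus f g : ex_rsum f -> ex_rsum g -> ex_rsum (fun x => f x + g x).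
Proof.
move=> f_sum g_sum; apply: (ex_series_ext (fun n => plus (enumR f n) (enumR g n))).
  by move=> n; rewrite /enumR /plus /=; case: (pickle_inv n) => //=; ring.
exact: ex_series_plus.
Qed.

Lemma rsum_plus f g : ex_rsum f -> ex_rsum g ->
  rsum (fun x => f x + g x) = rsum f + rsum g.
Proof.
move=> f_sum g_sum; rewrite /rsum -Series_plus //; apply: Series_ext => n.
by rewrite /enumR; case: (pickle_inv n) => //; lra.
Qed.

Lemma rsum_minus f g : ex_rsum f -> ex_rsum g ->
  rsum (fun x => f x - g x) = rsum f - rsum g.
Proof.
move=> f_sum g_sum; rewrite /rsum -Series_minus //; apply: Series_ext => n.
by rewrite /enumR; case: (pickle_inv n) => //; ring.
Qed.

Lemma rsum_scal f c : rsum (fun x => c * f x) = c * rsum f.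
Proof.
rewrite /rsum -Series_scal_l; apply: Series_ext => n.
by rewrite /enumR; case: (pickle_inv n) => //; ring.
Qed.

Lemma rsum0 f : (forall x, f x = 0) -> rsum f = 0.
Proof.
move=> f0; rewrite (@rsum_ext f (fun x => 0 * f x)) => [|x]; last by rewrite f0; ring.
by rewrite rsum_scal Rmult_0_l.
Qed.

Lemma ex_rsum0 : ex_rsum (fun _ : T => 0).
Proof.
exists 0; change (is_lim_seq (sum_n (enumR (fun _ : T => 0))) 0).
apply: (is_lim_seq_ext (fun _ => 0)) (is_lim_seq_const 0) => n.
by rewrite sum_n_enumR big1.
Qed.

Lemma rsum_le f g : (forall x, 0 <= f x <= g x) -> ex_rsum g -> rsum f <= rsum g.
Proof.
move=> le_fg; apply: Series_le => n; rewrite /enumR.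
by case: (pickle_inv n) => [x|]; [exact: le_fg|split; exact: Rle_refl].
Qed.

Lemma big_rsum (s : seq T) (F : T -> T -> R) :
  (forall k, ex_rsum (fun j => F j k)) ->
  ex_rsum (fun j => \big[Rplus/0]_(k <- s) F j k) /\
  \big[Rplus/0]_(k <- s) rsum (fun j => F j k) =
    rsum (fun j => \big[Rplus/0]_(k <- s) F j k).
Proof.
move=> F_sum; elim: s => [|k s [IH_sum IH]].
  split; first by apply: ex_rsum_ext ex_rsum0 => j; rewrite big_nil.
  by rewrite big_nil rsum0 // => j; rewrite big_nil.
have sum_cons j : \big[Rplus/0]_(k' <- k :: s) F j k' =
    F j k + \big[Rplus/0]_(k' <- s) F j k' by rewrite big_cons.
split; first by apply: ex_rsum_ext (ex_rsum_plus (F_sum k) IH_sum) => j; rewrite sum_cons.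
by rewrite big_cons IH -rsum_plus //; apply: rsum_ext => j; rewrite sum_cons.
Qed.

Lemma rsum_comp_le (tau : T -> T) g : injective tau ->
  (forall x, 0 <= g x) -> ex_rsum g ->
  ex_rsum (g \o tau) /\ rsum (g \o tau) <= rsum g.
Proof.
move=> tau_inj g_ge0 g_sum; apply: rsum_bounded => [x|N]; first exact: g_ge0.
rewrite -(big_map tau xpredT g).
have [K sub_K] := pickle_prefix_cover (map tau (pickle_prefix N)).
apply: Rle_trans (prefix_le_rsum K g_ge0 g_sum).
apply: big_Rplus_subset => //; last exact: pickle_prefix_uniq.
by rewrite (map_inj_uniq tau_inj) pickle_prefix_uniq.
Qed.

Section Reindex.
Variables tau tauinv : T -> T.
Hypothesis tauK : cancel tau tauinv.
Hypothesis tauinvK : cancel tauinv tau.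

Lemma has_rsum_reindex g : (forall x, 0 <= g x) -> ex_rsum g ->
  has_rsum (g \o tau) (rsum g).
Proof.
move=> g_ge0 g_sum.
have [gtau_sum le_gtau] := rsum_comp_le (can_inj tauK) g_ge0 g_sum.
have [_ le_g] := rsum_comp_le (can_inj tauinvK) (fun x => g_ge0 (tau x)) gtau_sum.
rewrite (@rsum_ext _ g) in le_g => [|x]; last by rewrite /= tauinvK.
have -> : rsum g = rsum (g \o tau) by apply: Rle_antisym.
exact: Series_correct.
Qed.

Lemma rsum_reindex g : ex_rsum (fun x => Rabs (g x)) -> rsum (g \o tau) = rsum g.
Proof.
move=> abs_sum.
(* [g = (|g| + g) - |g|] with both parts nonnegative. *)
pose gpos x := Rabs (g x) + g x.
have gpos_ge0 x : 0 <= gpos x.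
  by rewrite /gpos; have := Rle_abs (- g x); rewrite Rabs_Ropp; lra.
have gpos_sum : ex_rsum gpos.
  apply: (ex_rsum_le (g := fun x => Rabs (g x) * 2)); last exact: ex_rsum_scal.
  by move=> x; rewrite Rabs_pos_eq // /gpos; have := Rle_abs (g x); lra.
have abs_ge0 x : 0 <= Rabs (g x) by exact: Rabs_pos.
have gpos_tau : has_rsum (fun x => gpos (tau x)) (rsum gpos).
  exact: has_rsum_reindex.
have abs_tau : has_rsum (fun x => Rabs (g (tau x))) (rsum (fun x => Rabs (g x))).
  exact: has_rsum_reindex.
rewrite (@rsum_ext _ (fun x => gpos (tau x) - Rabs (g (tau x)))) => [|x];
  last by rewrite /gpos /=; ring.
rewrite rsum_minus; [|by exists (rsum gpos)|by exists (rsum (fun x => Rabs (g x)))].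
rewrite (has_rsumE gpos_tau) (has_rsumE abs_tau) -rsum_minus //.
by apply: rsum_ext => x; rewrite /gpos; ring.
Qed.

End Reindex.

End CountableSums.
Arguments pickle_prefix {T} N.

Lemma C_ext (z w : C) : Re z = Re w -> Im z = Im w -> z = w.
Proof. by case: z => a b; case: w => c d /= -> ->. Qed.

Ltac cring := apply: C_ext; rewrite /= /Re /Im /=; ring.

Lemma Im_le_Cmod (c : C) : Rabs (Im c) <= Cmod c.
Proof.
have := Cmod2_alt c; have := Cmod_ge_0 c; have := pow2_abs (Im c).
have := Rabs_pos (Im c); have := pow2_ge_0 (Re c); nra.
Qed.

Section ComplexSums.
Variable T : countType.
Implicit Types F : T -> C.

Lemma csum_reindex (tau tauinv : T -> T) F :
  cancel tau tauinv -> cancel tauinv tau ->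
  ex_rsum (fun x => Cmod (F x)) -> csum (F \o tau) = csum F.
Proof.
move=> tauK tauinvK F_sum; congr pair; apply: (rsum_reindex tauK tauinvK);
  apply: ex_rsum_le F_sum => x; rewrite Rabs_Rabsolu.
  exact: re_le_Cmod.
exact: Im_le_Cmod.
Qed.

Lemma csum_scal (r : R) F : csum (fun x => RtoC r * F x)%C = (RtoC r * csum F)%C.
Proof.
have scal_re : rsum (fun x => Re (RtoC r * F x)%C) = r * rsum (fun x => Re (F x)).
  by rewrite -rsum_scal; apply: rsum_ext => x; exact: re_scal_l.
have scal_im : rsum (fun x => Im (RtoC r * F x)%C) = r * rsum (fun x => Im (F x)).
  by rewrite -rsum_scal; apply: rsum_ext => x; exact: im_scal_l.
by rewrite /csum scal_re scal_im; cring.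
Qed.

Lemma csum_single F x0 : (forall x, x <> x0 -> F x = 0) -> csum F = F x0.
Proof.
move=> F0; rewrite /csum.
have [_ ->] := @rsum_single _ (fun x => Re (F x)) x0 (fun x x_x0 => f_equal Re (F0 x x_x0)).
have [_ ->] := @rsum_single _ (fun x => Im (F x)) x0 (fun x x_x0 => f_equal Im (F0 x x_x0)).
by case: (F x0).
Qed.

End ComplexSums.

Section StochasticPowers.
Variable T : countType.
Variable P : rmat T.
Hypothesis P_stoch : stochastic P.

Let P_ge0 i j : 0 <= P i j := P_stoch.1 i j.

Lemma stochastic_row i : ex_rsum (P i) /\ rsum (P i) = 1.
Proof. by have row_i := P_stoch.2 i; split; [exists 1|exact: has_rsumE]. Qed.

Lemma stochastic_le1 i j : P i j <= 1.
Proof. by have [row_sum <-] := stochastic_row i; exact: term_le_rsum. Qed.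

Let P01 j k : 0 <= P j k <= 1.
Proof. by split; [exact: P_ge0|exact: stochastic_le1]. Qed.

Lemma mpow_ge0 n i j : 0 <= mpow P n i j.
Proof.
elim: n i j => [|n IH] i j /=; first by case: (i == j); lra.
by apply: rsum_ge0 => x; apply: Rmult_le_pos.
Qed.

Lemma mpow_row n i : ex_rsum (mpow P n i) /\ rsum (mpow P n i) <= 1.
Proof.
elim: n i => [|n IH] i.
  have [sum0 ->] : ex_rsum (mpow P 0 i) /\ rsum (mpow P 0 i) = mpow P 0 i i.
    by apply: rsum_single => x /=; case: (i =P x) => // ->.
  by split => //=; rewrite eqxx; lra.
have [row_sum row_le] := IH i.
have col_sum k : ex_rsum (fun j => mpow P n i j * P j k).
  exact: ex_rsum_mul_le1 (mpow_ge0 n i) (P01^~ k) row_sum.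
apply: rsum_bounded => [k|N]; first exact: (mpow_ge0 n.+1).
have [_ /= ->] := big_rsum (pickle_prefix N) col_sum.
apply: Rle_trans row_le; apply: rsum_le => // j.
rewrite big_Rmult_distrl; split.
  by apply: Rmult_le_pos; [exact: mpow_ge0|exact: big_Rplus_ge0].
have [Pj_sum Pj_1] := stochastic_row j.
have := prefix_le_rsum N (P_ge0 j) Pj_sum; rewrite Pj_1.
have := mpow_ge0 n i j; have := big_Rplus_ge0 (pickle_prefix N) (P_ge0 j); nra.
Qed.

Lemma mpow_le1 n i j : mpow P n i j <= 1.
Proof.
have [row_sum row_le] := mpow_row n i.
by apply: Rle_trans row_le; apply: term_le_rsum => // x; exact: mpow_ge0.
Qed.

Lemma mpowS_gt0 n i k :
  0 < mpow P n.+1 i k <-> exists j, 0 < mpow P n i j /\ 0 < P j k.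
Proof.
split => [pos_ik|[j [pos_ij pos_jk]]].
  apply: NNPP => no_path; move: pos_ik => /=; rewrite rsum0; first lra.
  move=> j; case: (Rle_lt_or_eq_dec _ _ (mpow_ge0 n i j)) => [pos_ij|<-]; last ring.
  case: (Rle_lt_or_eq_dec _ _ (P_ge0 j k)) => [pos_jk|<-]; last ring.
  by case: no_path; exists j.
have terms_ge0 x : 0 <= mpow P n i x * P x k by apply: Rmult_le_pos; [exact: mpow_ge0|].
have col_sum : ex_rsum (fun x => mpow P n i x * P x k).
  exact: ex_rsum_mul_le1 (mpow_ge0 n i) (P01^~ k) (mpow_row n i).1.
apply: Rlt_le_trans (term_le_rsum j terms_ge0 col_sum).
exact: Rmult_lt_0_compat.
Qed.

Lemma mpow0_gt0 i j : 0 < mpow P 0 i j -> i = j.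
Proof. by rewrite /=; case: (i =P j) => // _; lra. Qed.

Lemma mpow1 i k : mpow P 1 i k = P i k.
Proof.
have [_ /= ->] : ex_rsum (fun j => mpow P 0 i j * P j k) /\
    rsum (fun j => mpow P 0 i j * P j k) = mpow P 0 i i * P i k.
  by apply: rsum_single => x /= x_i; case: (i =P x) => [i_x|_]; [case: x_i|ring].
by rewrite eqxx Rmult_1_l.
Qed.

End StochasticPowers.

Lemma cmat_ext (T : countType) (A B : cmat T) : (forall i j, A i j = B i j) -> A = B.
Proof. by move=> AB; do 2!apply: functional_extensionality => ?; exact: AB. Qed.

Section ArvSummability.
Variable T : countType.
Variable P : rmat T.
Implicit Types A B : cmat T.

Lemma Arv_col n A j : Arv P n A -> ex_rsum (fun i => Cmod (A i j) ^ 2).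
Proof. by case=> _ [M col_M]; case: (col_M j). Qed.

Lemma Arv_bounded n A : Arv P n A -> exists M, forall i j, Cmod (A i j) ^ 2 <= M.
Proof.
case=> _ [M col_M]; exists M => i j; have [col_sum col_le] := col_M j.
apply: Rle_trans col_le.
by apply: (term_le_rsum (f := fun x => Cmod (A x j) ^ 2)) => // x; exact: pow2_ge_0.
Qed.

Lemma ex_rsum_ip n A B j : Arv P n A -> Arv P n B ->
  ex_rsum (fun i => Cmod (Cconj (A i j) * B i j)%C).
Proof.
move=> A_arv B_arv; apply: (ex_rsum_le (g := fun i => Cmod (A i j) ^ 2 + Cmod (B i j) ^ 2)).
  move=> i; rewrite Cmod_mult Cmod_conj Rabs_pos_eq;
    last by apply: Rmult_le_pos; exact: Cmod_ge_0.
  by have := Cmod_ge_0 (A i j); have := Cmod_ge_0 (B i j); nra.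
exact: ex_rsum_plus (Arv_col j A_arv) (Arv_col j B_arv).
Qed.

Hypothesis P_stoch : stochastic P.

Lemma ex_rsum_Umul n m A B i k : Arv P n A -> Arv P m B ->
  ex_rsum (fun j => Cmod ((RtoC (sqrt (mpow P n i j)) * A i j) *
                          (RtoC (sqrt (mpow P m j k)) * B j k))%C).
Proof.
move=> A_arv B_arv; have [MA le_MA] := Arv_bounded A_arv.
apply: (ex_rsum_le (g := fun j => mpow P n i j * MA + Cmod (B j k) ^ 2)); last first.
  exact: ex_rsum_plus (ex_rsum_scal MA (mpow_row P_stoch n i).1) (Arv_col k B_arv).
move=> j; rewrite Rabs_pos_eq; last exact: Cmod_ge_0.
rewrite !Cmod_mult !Cmod_R !(Rabs_pos_eq (sqrt _)); try exact: sqrt_pos.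
set s1 := sqrt (mpow P n i j); set s2 := sqrt (mpow P m j k).
set a := Cmod (A i j); set b := Cmod (B j k).
have [s1_ge0 s2_ge0] : 0 <= s1 /\ 0 <= s2 by split; exact: sqrt_pos.
have [a_ge0 b_ge0] : 0 <= a /\ 0 <= b by split; exact: Cmod_ge_0.
have s1_sq : s1 ^ 2 = mpow P n i j by rewrite pow2_sqrt //; exact: mpow_ge0.
have s2_le1 : s2 <= 1 by rewrite -sqrt_1; apply: sqrt_le_1_alt; exact: mpow_le1.
have drop_s2 : s1 * a * (s2 * b) <= s1 * a * b.
  by apply: Rmult_le_compat_l; [nra|nra].
have am_gm : s1 * a * b <= (s1 * a) ^ 2 + b ^ 2 by nra.
have bound_a : (s1 * a) ^ 2 <= mpow P n i j * MA.
  rewrite Rpow_mult_distr s1_sq; apply: Rmult_le_compat_l; [exact: mpow_ge0|exact: le_MA].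
lra.
Qed.

End ArvSummability.

Lemma Rdiv_ge0 a c : 0 <= a -> 0 <= c -> 0 <= a / c.
Proof.
move=> a_ge0 c_ge0; case: (Rle_lt_or_eq_dec _ _ c_ge0) => [c_pos|<-].
  exact: Rle_mult_inv_pos.
by rewrite /Rdiv Rinv_0 Rmult_0_r; exact: Rle_refl.
Qed.

(* For [x = 0] both sides vanish, the right one because [/ 0 = 0]. *)
Lemma flatinv_sqrt p1 p2 x : 0 <= p1 -> 0 <= p2 -> 0 <= x ->
  flatinv (sqrt x) * sqrt p1 * sqrt p2 = sqrt (p1 * p2 / x).
Proof.
move=> p1_ge0 p2_ge0 x_ge0; rewrite /flatinv.
case: (Rle_lt_or_eq_dec _ _ x_ge0) => [x_pos|<-].
  have sqrt_pos : 0 < sqrt x by exact: sqrt_lt_R0.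
  by case: Rlt_dec => // _ /=; rewrite sqrt_div_alt // sqrt_mult_alt //; field; lra.
rewrite sqrt_0; case: Rlt_dec => zero_pos /=; first lra.
by rewrite /Rdiv Rinv_0 Rmult_0_r sqrt_0; ring.
Qed.

Definition relabel (T : countType) (tau : T -> T) (A : cmat T) : cmat T :=
  fun i j => A (tau i) (tau j).

Lemma Arv_relabel (T : countType) (P Q : rmat T) (tau tauinv : T -> T) n A :
  cancel tau tauinv -> cancel tauinv tau ->
  (forall i j, mpow Q n i j = 0 -> mpow P n (tau i) (tau j) = 0) ->
  Arv P n A -> Arv Q n (relabel tau A).
Proof.
move=> tauK tauinvK zero_QP [A0 [M col_M]]; split.
  by move=> i j Q0; apply: A0; exact: zero_QP.
exists M => j; have [col_sum col_le] := col_M (tau j).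
have col_tau :=
  has_rsum_reindex tauK tauinvK (fun i => pow2_ge_0 (Cmod (A i (tau j)))) col_sum.
by split; [exists (rsum (fun i => Cmod (A i (tau j)) ^ 2))|rewrite (has_rsumE col_tau)].
Qed.

Lemma Cmult_scaled_eq (c1 c2 s1 s2 t1 t2 : R) (a b : C) :
  c1 * s1 * s2 = c2 * t1 * t2 \/ (a * b = 0)%C ->
  (RtoC c1 * ((RtoC s1 * a) * (RtoC s2 * b)) =
   RtoC c2 * ((RtoC t1 * a) * (RtoC t2 * b)))%C.
Proof.
have scaledE c s t :
    (RtoC c * ((RtoC s * a) * (RtoC t * b)))%C = (RtoC (c * s * t) * (a * b))%C.
  by rewrite !RtoC_mult; ring.
by rewrite !scaledE; case=> [->|->]; ring.
Qed.

Section StarToIso.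
Variable T : countType.
Variables P Q : rmat T.
Hypotheses (P_stoch : stochastic P) (Q_stoch : stochastic Q).
Variables sigma sigmainv : T -> T.
Hypotheses (sigmaK : cancel sigma sigmainv) (sigmainvK : cancel sigmainv sigma).
Hypothesis star : star_cond P Q sigma.

Lemma star_mpow_gt0 n a b : 0 < mpow P n a b <-> 0 < mpow Q n (sigma a) (sigma b).
Proof.
split => [P_pos|].
  (* (b) with [m = 0] reads [1 = Q / Q], impossible for [Q = 0] since [/ 0 = 0]. *)
  have P_pos0 : 0 < mpow P n a b * mpow P 0 b b by rewrite /= eqxx Rmult_1_r.
  have := star.2 n 0%N a b b P_pos0.
  rewrite /= !eqxx !Rmult_1_r !Nat.add_0_r /Rdiv Rinv_r; last lra.
  case: (Rle_lt_or_eq_dec _ _ (mpow_ge0 Q_stoch n (sigma a) (sigma b))) => // <-.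
  by rewrite Rinv_0 Rmult_0_r; lra.
elim: n b => [|n IH] b.
  by rewrite /= (inj_eq (can_inj sigmaK)).
case/(mpowS_gt0 Q_stoch) => y; rewrite -(sigmainvK y) => -[Q_ay Q_yb].
apply/(mpowS_gt0 P_stoch); exists (sigmainv y); split; first exact: IH.
exact/(star.1 (sigmainv y) b).
Qed.

Lemma relabel_Arv n A : Arv P n A -> Arv Q n (relabel sigmainv A).
Proof.
apply: Arv_relabel sigmainvK sigmaK _ => i j Q0.
case: (Rle_lt_or_eq_dec _ _ (mpow_ge0 P_stoch n (sigmainv i) (sigmainv j))) => [P_pos|//].
by move: P_pos; rewrite star_mpow_gt0 !sigmainvK Q0; lra.
Qed.

Lemma relabel_onto n B : Arv Q n B -> exists A, Arv P n A /\ relabel sigmainv A = B.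
Proof.
move=> B_arv; exists (relabel sigma B); split.
  apply: Arv_relabel sigmaK sigmainvK _ B_arv => i j P0.
  case: (Rle_lt_or_eq_dec _ _ (mpow_ge0 Q_stoch n (sigma i) (sigma j))) => [Q_pos|//].
  by move: Q_pos; rewrite -star_mpow_gt0 P0; lra.
by apply: cmat_ext => i j; rewrite /relabel !sigmainvK.
Qed.

Lemma ip_relabel n A B : Arv P n A -> Arv P n B ->
  ip (relabel sigmainv A) (relabel sigmainv B) = ip A B \o sigmainv.
Proof.
move=> A_arv B_arv; apply: functional_extensionality => j.
exact: (csum_reindex sigmainvK sigmaK (ex_rsum_ip (sigmainv j) A_arv B_arv)).
Qed.

Lemma Umul_relabel n m A B : Arv P n A -> Arv P m B ->
  relabel sigmainv (Umul P n m A B) =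
  Umul Q n m (relabel sigmainv A) (relabel sigmainv B).
Proof.
move=> A_arv B_arv; apply: cmat_ext => i k.
rewrite -(sigmainvK i) -(sigmainvK k); move: (sigmainv i) (sigmainv k) => a b.
have Q_sum :=
  ex_rsum_Umul Q_stoch (sigma a) (sigma b) (relabel_Arv A_arv) (relabel_Arv B_arv).
rewrite /relabel /Umul !sigmaK in Q_sum *.
rewrite -(csum_reindex sigmaK sigmainvK Q_sum) -!csum_scal.
congr csum; apply: functional_extensionality => j /=; rewrite sigmaK.
apply: Cmult_scaled_eq.
case: (Rle_lt_or_eq_dec _ _ (mpow_ge0 P_stoch n a j)) => [P_aj|P_aj]; last first.
  by right; rewrite (A_arv.1 a j (esym P_aj)); ring.
case: (Rle_lt_or_eq_dec _ _ (mpow_ge0 P_stoch m j b)) => [P_jb|P_jb]; last first.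
  by right; rewrite (B_arv.1 j b (esym P_jb)); ring.
left; rewrite !flatinv_sqrt; try exact: mpow_ge0.
by rewrite (star.2 n m a j b (Rmult_lt_0_compat _ _ P_aj P_jb)).
Qed.

Lemma star_unitary_iso :
  rho_unitary_iso P Q (fun f => f \o sigmainv) (fun _ => relabel sigmainv).
Proof.
split => [n _|n m A B _ _]; last exact: Umul_relabel.
split; first by move=> A; exact: relabel_Arv.
split; first by move=> B; exact: relabel_onto.
do 3!split => //; exact: ip_relabel.
Qed.

End StarToIso.

Section MatrixUnits.
Variable T : countType.
Implicit Types (P : rmat T) (A : cmat T) (i j k : T).

Definition delta_cmat i j : cmat T :=
  fun x y => if (x == i) && (y == j) then RtoC 1 else RtoC 0.
Definition cmat0 : cmat T := fun _ _ => RtoC 0.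

Lemma delta_cmat_diag i j : delta_cmat i j i j = RtoC 1.
Proof. by rewrite /delta_cmat !eqxx. Qed.

Lemma cscal1 A : cscal (RtoC 1) A = A.
Proof. by apply: cmat_ext => x y; rewrite /cscal; cring. Qed.

Lemma cscal0 A : cscal (RtoC 0) A = cmat0.
Proof. by apply: cmat_ext => x y; rewrite /cscal /cmat0; cring. Qed.

Lemma pind_linf j : linf (pind j).
Proof. by exists 1 => i; rewrite /pind; case: (i == j); rewrite ?Cmod_1 ?Cmod_0; lra. Qed.

Lemma delta_cmat_Arv P n i j : 0 < mpow P n i j -> Arv P n (delta_cmat i j).
Proof.
move=> P_ij; split.
  move=> x y; rewrite /delta_cmat.
  by case: (x =P i) => [->|//]; case: (y =P j) => [->|//]; lra.
exists 1 => y.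
have [col_sum ->] : ex_rsum (fun x => Cmod (delta_cmat i j x y) ^ 2) /\
    rsum (fun x => Cmod (delta_cmat i j x y) ^ 2) = Cmod (delta_cmat i j i y) ^ 2.
  apply: rsum_single => x x_i; rewrite /delta_cmat.
  by case: (x =P i) => // _; rewrite Cmod_0; ring.
by split => //; rewrite /delta_cmat eqxx; case: (y == j); rewrite ?Cmod_1 ?Cmod_0; lra.
Qed.

Lemma cmat0_Arv P n : Arv P n cmat0.
Proof.
split => //; exists 0 => y; rewrite /cmat0 Cmod_0.
split; first by apply: (ex_rsum_ext _ (@ex_rsum0 T)) => x; ring.
by rewrite rsum0 => [|x]; [exact: Rle_refl|ring].
Qed.

Lemma delta_localize A i j :
  ract (lact (pind i) A) (pind j) = cscal (A i j) (delta_cmat i j).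
Proof.
apply: cmat_ext => x y; rewrite /ract /lact /pind /cscal /delta_cmat.
by case: (x =P i) => [->|_]; case: (y =P j) => [->|_]; cring.
Qed.

Lemma ip_scal_delta (l : C) i j y :
  ip (cscal l (delta_cmat i j)) (cscal l (delta_cmat i j)) y =
  if y == j then RtoC (Cmod l ^ 2) else RtoC 0.
Proof.
rewrite /ip (csum_single (x0 := i)) => [|x x_i]; last first.
  by rewrite /cscal /delta_cmat; case: (x =P i) => // _; cring.
rewrite /cscal /delta_cmat eqxx /=; case: (y == j); last by cring.
by rewrite Cmod2_conj; cring.
Qed.

Lemma ip_delta i j : ip (delta_cmat i j) (delta_cmat i j) = pind j.
Proof.
apply: functional_extensionality => y.
by rewrite -[delta_cmat i j]cscal1 ip_scal_delta Cmod_1 /pind; case: (y == j); cring.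
Qed.

Definition Ucoef P n m i j k : R :=
  flatinv (sqrt (mpow P (Nat.add n m) i k)) * sqrt (mpow P n i j) * sqrt (mpow P m j k).

Lemma Ucoef_sqrt P n m i j k : stochastic P ->
  Ucoef P n m i j k = sqrt (mpow P n i j * mpow P m j k / mpow P (Nat.add n m) i k).
Proof. by move=> P_stoch; rewrite /Ucoef flatinv_sqrt //; exact: mpow_ge0. Qed.

Lemma Umul_delta P n m i j k (l1 l2 : C) :
  Umul P n m (cscal l1 (delta_cmat i j)) (cscal l2 (delta_cmat j k)) =
  cscal (l1 * l2 * RtoC (Ucoef P n m i j k))%C (delta_cmat i k).
Proof.
apply: cmat_ext => x z; rewrite /Umul (csum_single (x0 := j)) => [|y y_j]; last first.
  by rewrite /cscal /delta_cmat; case: (y =P j) => // _; rewrite andbF; cring.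
rewrite /cscal /delta_cmat /Ucoef eqxx.
by case: (x =P i) => [->|_]; case: (z =P k) => [->|_]; rewrite ?eqxx /=; cring.
Qed.

End MatrixUnits.
Arguments cmat0 {T}.

Section IsoToStar.
Variable T : countType.
Variables P Q : rmat T.
Hypotheses (P_stoch : stochastic P) (Q_stoch : stochastic Q).
Variable rho : (T -> C) -> (T -> C).
Variable sigma : T -> T.
Hypothesis sigma_bij : bijective sigma.
Hypothesis rho_pind : forall j, rho (pind j) = pind (sigma j).
Variable V : nat -> cmat T -> cmat T.
Hypothesis V_iso : rho_unitary_iso P Q rho V.

Lemma iso_cmat0 n : (1 <= n)%coq_nat -> V n cmat0 = cmat0.
Proof.
move=> n_ge1; have [_ [_ [_ [V_scal _]]]] := V_iso.1 n n_ge1.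
by rewrite -(cscal0 cmat0) V_scal ?cscal0 //; exact: cmat0_Arv.
Qed.

Lemma iso_delta n i j : (1 <= n)%coq_nat -> 0 < mpow P n i j ->
  exists l, V n (delta_cmat i j) = cscal l (delta_cmat (sigma i) (sigma j)) /\ Cmod l = 1.
Proof.
move=> n_ge1 P_ij; have [_ [_ [_ [_ [V_bimod V_ip]]]]] := V_iso.1 n n_ge1.
have E_arv := delta_cmat_Arv P_ij.
have E_loc : ract (lact (pind i) (delta_cmat i j)) (pind j) = delta_cmat i j.
  by rewrite delta_localize delta_cmat_diag cscal1.
set l := V n (delta_cmat i j) (sigma i) (sigma j).
have V_E : V n (delta_cmat i j) = cscal l (delta_cmat (sigma i) (sigma j)).
  rewrite -{1}E_loc V_bimod; try exact: pind_linf; last exact: E_arv.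
  by rewrite !rho_pind delta_localize.
exists l; split => //.
have := f_equal (fun f => f (sigma j)) (V_ip _ _ E_arv E_arv).
rewrite V_E ip_scal_delta ip_delta rho_pind /pind !eqxx => /(f_equal Re) /= l_sq.
by have := Cmod_ge_0 l; nra.
Qed.

Lemma iso_mpow_gt0 n i j : 0 < mpow P n i j <-> 0 < mpow Q n (sigma i) (sigma j).
Proof.
case: n => [|n]; first by rewrite /= (inj_eq (bij_inj sigma_bij)).
have n_ge1 : (1 <= n.+1)%coq_nat by apply/leP.
have [_ [V_onto [_ [_ [V_bimod _]]]]] := V_iso.1 _ n_ge1.
split => [P_ij|Q_ij]; apply: Rnot_le_lt => le0.
  have [l [V_E l_unit]] := iso_delta n_ge1 P_ij.
  have Q0 : mpow Q n.+1 (sigma i) (sigma j) = 0.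
    by have := mpow_ge0 Q_stoch n.+1 (sigma i) (sigma j); lra.
  have := (V_iso.1 _ n_ge1).1 _ (delta_cmat_Arv P_ij).
  case=> /(_ _ _ Q0); rewrite V_E /cscal delta_cmat_diag Cmult_1_r => l0 _.
  by move: l_unit; rewrite l0 Cmod_0; lra.
have [A [A_arv V_A]] := V_onto _ (delta_cmat_Arv Q_ij).
have P0 : mpow P n.+1 i j = 0 by have := mpow_ge0 P_stoch n.+1 i j; lra.
have := V_bimod _ _ _ (pind_linf i) (pind_linf j) A_arv.
rewrite delta_localize (A_arv.1 i j P0) cscal0 (iso_cmat0 n_ge1) V_A !rho_pind.
rewrite delta_localize delta_cmat_diag => /(f_equal (fun W => W (sigma i) (sigma j))).
by rewrite /cmat0 /cscal delta_cmat_diag => /(f_equal Re) /=; lra.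
Qed.

(* Apply [V] to [U (E_ij, E_jk) = c E_ik]: the factors produced by [V] are unimodular,
   so the coefficients [c] for [P] and for [Q] have the same absolute value. *)
Lemma iso_Ucoef n m i j k : (1 <= n)%coq_nat -> (1 <= m)%coq_nat ->
  0 < mpow P n i j -> 0 < mpow P m j k ->
  Ucoef P n m i j k = Ucoef Q n m (sigma i) (sigma j) (sigma k).
Proof.
move=> n_ge1 m_ge1 P_ij P_jk.
have [l1 [V_ij l1_unit]] := iso_delta n_ge1 P_ij.
have [l2 [V_jk l2_unit]] := iso_delta m_ge1 P_jk.
have V_U := V_iso.2 n m _ _ n_ge1 m_ge1 (delta_cmat_Arv P_ij) (delta_cmat_Arv P_jk).
rewrite V_ij V_jk Umul_delta -[delta_cmat i j]cscal1 -[delta_cmat j k]cscal1 in V_U.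
rewrite Umul_delta !Cmult_1_l in V_U.
set cP := Ucoef P n m i j k in V_U *; set cQ := Ucoef Q _ _ _ _ _ in V_U *.
have cP_ge0 : 0 <= cP by rewrite /cP Ucoef_sqrt //; exact: sqrt_pos.
have cQ_ge0 : 0 <= cQ by rewrite /cQ Ucoef_sqrt //; exact: sqrt_pos.
have nm_ge1 : (1 <= Nat.add n m)%coq_nat by lia.
case: (Rle_lt_or_eq_dec _ _ (mpow_ge0 P_stoch (Nat.add n m) i k)) => [P_ik|P0].
  have [l3 [V_ik l3_unit]] := iso_delta nm_ge1 P_ik.
  have [_ [_ [_ [V_scal _]]]] := V_iso.1 _ nm_ge1.
  rewrite V_scal ?V_ik in V_U; last exact: delta_cmat_Arv.
  move: V_U => /(f_equal (fun W => Cmod (W (sigma i) (sigma k)))).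
  rewrite /cscal delta_cmat_diag !Cmod_mult Cmod_1 !Cmod_R l1_unit l2_unit l3_unit.
  by rewrite !Rabs_pos_eq //; lra.
have cP0 : cP = 0 by rewrite /cP Ucoef_sqrt // -P0 /Rdiv Rinv_0 Rmult_0_r sqrt_0.
rewrite cP0 cscal0 (iso_cmat0 nm_ge1) in V_U *.
move: V_U => /(f_equal (fun W => Cmod (W (sigma i) (sigma k)))).
rewrite /cmat0 /cscal delta_cmat_diag Cmod_0 !Cmod_mult Cmod_1 !Cmod_R l1_unit l2_unit.
by rewrite !Rabs_pos_eq //; lra.
Qed.

Lemma iso_ratio n m i j k : (1 <= n)%coq_nat -> (1 <= m)%coq_nat ->
  0 < mpow P n i j -> 0 < mpow P m j k ->
  mpow P n i j * mpow P m j k / mpow P (Nat.add n m) i k =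
  mpow Q n (sigma i) (sigma j) * mpow Q m (sigma j) (sigma k)
    / mpow Q (Nat.add n m) (sigma i) (sigma k).
Proof.
move=> n_ge1 m_ge1 P_ij P_jk.
have := iso_Ucoef n_ge1 m_ge1 P_ij P_jk; rewrite !Ucoef_sqrt //.
by apply: sqrt_inj; apply: Rdiv_ge0; try apply: Rmult_le_pos; exact: mpow_ge0.
Qed.

Lemma iso_star_cond : star_cond P Q sigma.
Proof.
split => [i j|n m i j k P_pos].
  by rewrite -(mpow1 P) -(mpow1 Q); exact: iso_mpow_gt0.
have [P_ij P_jk] : 0 < mpow P n i j /\ 0 < mpow P m j k.
  by have := mpow_ge0 P_stoch n i j; have := mpow_ge0 P_stoch m j k; split; nra.
case: n P_ij P_pos => [|n] P_ij P_pos.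
  move/mpow0_gt0: P_ij => ij; subst j.
  have Q_ik := (iso_mpow_gt0 m i k).1 P_jk.
  by rewrite /= !eqxx !Rmult_1_l /Rdiv !Rinv_r //; exact: Rgt_not_eq.
case: m P_jk P_pos => [|m] P_jk P_pos.
  move/mpow0_gt0: P_jk => jk; subst k.
  have Q_ij := (iso_mpow_gt0 n.+1 i j).1 P_ij.
  by rewrite Nat.add_0_r /= !eqxx !Rmult_1_r /Rdiv !Rinv_r //; exact: Rgt_not_eq.
by apply: iso_ratio => //; apply/leP.
Qed.

End IsoToStar.

Theorem mainTheorem8 (T : countType) (P Q : T -> T -> R) :
  stochastic P -> stochastic Q ->
  (forall (rho : (T -> C) -> (T -> C)) (sigma : T -> T),
     star_aut rho -> bijective sigma ->
     (forall j, rho (pind j) = pind (sigma j)) ->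
     (exists V, rho_unitary_iso P Q rho V) ->
     star_cond P Q sigma) /\
  (forall (sigma sigmainv : T -> T),
     cancel sigma sigmainv -> cancel sigmainv sigma ->
     star_cond P Q sigma ->
     exists V, rho_unitary_iso P Q (fun f => f \o sigmainv) V).
Proof.
move=> P_stoch Q_stoch; split.
  move=> rho sigma _ sigma_bij rho_pind [V V_iso].
  exact: (iso_star_cond P_stoch Q_stoch sigma_bij rho_pind V_iso).
move=> sigma sigmainv sigmaK sigmainvK star.
by exists (fun _ => relabel sigmainv); exact: star_unitary_iso.
Qed.
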